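(* Let $\underline{p}_g\le \bar{p}_g$, $p_{g0}\in\mathbb{R}$, and $\alpha_g\neq 0$ be real constants. For $\Delta\in\mathbb{R}$ define \[ p_{gk}(\Delta):=\mathrm{proj}_{[\underline{p}_g,\bar{p}_g]}(p_{g0}+\alpha_g\Delta),\qquad \tilde{p}_{gk}(\Delta):=\min\{\bar{p}_g,\,p_{g0}+\alpha_g\Delta\}, \] and for $\epsilon>0$ define \[ p_{gk}^\epsilon(\Delta):=\underline{p}_g+\epsilon\ln\left[1+\frac{\exp[(\bar{p}_g-\underline{p}_g)/\epsilon]}{1+\exp[(\bar{p}_g-p_{g0}-\alpha_g\Delta)/\epsilon]}\right],\qquad \tilde{p}_{gk}^{\epsilon}(\Delta):=\bar{p}_g-\epsilon\ln\left[1+\exp\left(\frac{\bar{p}_g-p_{g0}-\alpha_g\Delta}{\epsilon}\right)\right]. \] Then, as $\epsilon\to 0$, \[ \sup\left\{|p_{gk}^\epsilon(\Delta)-p_{gk}(\Delta)|:\Delta\in\mathbb{R}\right\}\to 0 \quad\text{and}\quad \sup\left\{|\tilde{p}_{gk}^{\epsilon}(\Delta)-\tilde{p}_{gk}(\Delta)|:\Delta\ge (\underline{p}_g-p_{g0})/\alpha_g\right\}\to 0. \]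
   Context: $\mathrm{proj}_{[a,b]}(x)=\max\{a,\min\{b,x\}\}$ denotes projection onto the interval $[a,b]$. In the application, $p_{gk}(\Delta)$ models the active power output of generator $g$ in contingency $k$ as a function of the system-wide imbalance $\Delta$, with base-case output $p_{g0}$, bounds $\underline{p}_g,\bar{p}_g$, and participation factor $\alpha_g$. *)

From HB Require Import structures.
From mathcomp Require Import all_boot all_order all_algebra.
From mathcomp Require Import all_classical all_reals all_analysis.
Set Implicit Arguments. Unset Strict Implicit. Unset Printing Implicit Defensive.
Import Order.TTheory GRing.Theory Num.Theory.
Local Open Scope ring_scope.

Definition proj_int {R : realType} (a b x : R) : R := Num.max a (Num.min b x).

Definition pgk {R : realType} (pl pu p0 alpha D : R) : R :=
  proj_int pl pu (p0 + alpha * D).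

Definition pgk_tilde {R : realType} (pu p0 alpha D : R) : R :=
  Num.min pu (p0 + alpha * D).

Definition pgk_eps {R : realType} (pl pu p0 alpha eps D : R) : R :=
  pl + eps * ln (1 + expR ((pu - pl) / eps)
                      / (1 + expR ((pu - p0 - alpha * D) / eps))).

Definition pgk_tilde_eps {R : realType} (pu p0 alpha eps D : R) : R :=
  pu - eps * ln (1 + expR ((pu - p0 - alpha * D) / eps)).

From HB Require Import structures.
From mathcomp Require Import all_boot all_order all_algebra.
From mathcomp Require Import all_classical all_reals all_analysis.
From mathcomp Require Import ring lra.
Import Order.TTheory GRing.Theory Num.Theory.
Local Open Scope classical_set_scope.
Local Open Scope ring_scope.

(* The softplus [eps ln(1 + exp(t/eps))] lies between [max(0, t)] and
   [max(0, t) + eps]. Both smoothings replace [max(0, _)] by the softplus in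
   [min(u, x) = u - max(0, u - x)] and [proj_[l,u](x) = l + max(0, min(u, x) - l)],
   the smoothed projection taking the smoothed [min] as its argument. So the
   smoothed [min] is within [eps] of [min] and, [max(0, _)] being 1-Lipschitz,
   the smoothed projection is within [2 eps] of the projection, uniformly
   in Delta. *)

Definition softplus {R : realType} (eps t : R) : R := eps * ln (1 + expR (t / eps)).

Section Softplus.
Context {R : realType}.
Implicit Types eps s t : R.

Lemma maxr0_le_ln1Dexp s : Num.max 0 s <= ln (1 + expR s).
Proof.
rewrite ge_max; apply/andP; split.
  by apply: ln_ge0; rewrite lerDl expR_ge0.
by rewrite -{1}(expRK s) ler_ln ?posrE ?addr_gt0 ?expR_gt0 // lerDr.
Qed.

Lemma ln1Dexp_le_maxr0D1 s : ln (1 + expR s) <= Num.max 0 s + 1.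
Proof.
set m := Num.max 0 s.
have le_1Dexp : 1 + expR s <= 2 * expR m.
  rewrite mulr2n mulrDl mul1r lerD //.
    by rewrite -expR0 ler_expR le_max lexx.
  by rewrite ler_expR le_max lexx orbT.
have ln2_le1 : ln (2 : R) <= 1 by apply: le_ln1Dx; lra.
apply: le_trans (_ : ln (2 * expR m) <= _).
  by rewrite ler_ln ?posrE ?addr_gt0 ?mulr_gt0 ?expR_gt0.
by rewrite lnM ?posrE ?expR_gt0 // expRK addrC lerD2l.
Qed.

Lemma softplus_bounds eps t : 0 < eps ->
  Num.max 0 t <= softplus eps t <= Num.max 0 t + eps.
Proof.
move=> eps_gt0; have eps_neq0 : eps != 0 by rewrite gt_eqF.
have -> : Num.max 0 t = eps * Num.max 0 (t / eps).
  by rewrite maxr_pMr ?ltW // mulr0 mulrCA divff // mulr1.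
set m := Num.max 0 (t / eps).
have -> : eps * m + eps = eps * (m + 1) by rewrite mulrDr mulr1.
by rewrite /softplus !ler_pM2l // maxr0_le_ln1Dexp ln1Dexp_le_maxr0D1.
Qed.

Lemma dist_softplus_maxr0 eps t : 0 < eps ->
  `|softplus eps t - Num.max 0 t| <= eps.
Proof.
move=> eps_gt0; have /andP[lo hi] := softplus_bounds eps t eps_gt0.
by rewrite ger0_norm ?subr_ge0 // lerBlDr addrC.
Qed.

End Softplus.

Lemma dist_maxr0 {R : realType} (x y : R) :
  `|Num.max 0 x - Num.max 0 y| <= `|x - y|.
Proof.
have [xy|xy] := leP 0 (x - y); [rewrite (ger0_norm xy) | rewrite (ltr0_norm xy)];
case: (leP 0 x) => x0; case: (leP 0 y) => y0; rewrite ler_norml; lra.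
Qed.

Lemma minrE_maxr0 {R : realType} (u x : R) : Num.min u x = u - Num.max 0 (u - x).
Proof. by case: (leP u x) => ux; [rewrite (max_idPl _) | rewrite (max_idPr _)]; lra. Qed.

Lemma proj_intE_maxr0 {R : realType} (l u x : R) :
  proj_int l u x = l + Num.max 0 (Num.min u x - l).
Proof.
rewrite /proj_int; set m := Num.min u x.
by case: (leP l m) => lm; [rewrite (max_idPr _) | rewrite (max_idPl _)]; lra.
Qed.

Section Smoothing.
Context {R : realType}.
Variables l u p0 a eps D : R.
Hypothesis eps_gt0 : 0 < eps.

Lemma pgk_tilde_epsE :
  pgk_tilde_eps u p0 a eps D = u - softplus eps (u - (p0 + a * D)).
Proof. by rewrite /pgk_tilde_eps /softplus opprD addrA. Qed.

Lemma pgk_epsE :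
  pgk_eps l u p0 a eps D = l + softplus eps (pgk_tilde_eps u p0 a eps D - l).
Proof.
set E := expR ((u - p0 - a * D) / eps).
have E1_gt0 : 0 < 1 + E by rewrite addr_gt0 ?expR_gt0.
rewrite /pgk_eps /softplus -/E.
suff -> : expR ((u - l) / eps) / (1 + E)
          = expR ((pgk_tilde_eps u p0 a eps D - l) / eps) by [].
have -> : (pgk_tilde_eps u p0 a eps D - l) / eps = (u - l) / eps - ln (1 + E).
  by rewrite /pgk_tilde_eps -/E; field; rewrite gt_eqF.
by rewrite expRD expRN lnK.
Qed.

Lemma dist_pgk_tilde_eps :
  `|pgk_tilde_eps u p0 a eps D - pgk_tilde u p0 a D| <= eps.
Proof.
rewrite pgk_tilde_epsE /pgk_tilde minrE_maxr0 opprB addrC addrA addrNK.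
by rewrite distrC dist_softplus_maxr0.
Qed.

Lemma dist_pgk_eps : `|pgk_eps l u p0 a eps D - pgk l u p0 a D| <= eps *+ 2.
Proof.
set g := pgk_tilde_eps u p0 a eps D; set m := pgk_tilde u p0 a D.
rewrite pgk_epsE /pgk proj_intE_maxr0 -/(pgk_tilde u p0 a D) -/m -/g.
rewrite opprD addrACA addrN add0r mulr2n.
apply: le_trans (ler_distD (Num.max 0 (g - l)) _ _) _.
rewrite lerD ?dist_softplus_maxr0 //.
apply: le_trans (dist_maxr0 _ _) _.
by rewrite opprB addrA subrK dist_pgk_tilde_eps.
Qed.

End Smoothing.

Lemma ereal_sup_cvg0_at_right {R : realType} {T : Type}
    (F : R -> T -> R) (P : set T) (n : nat) :
  P !=set0 ->
  (forall eps x, 0 < eps -> P x -> `|F eps x| <= eps *+ n) ->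
  (fun eps => ereal_sup [set (`|F eps x|)%:E | x in P]) @ 0^'+ --> (0 : \bar R)%E.
Proof.
move=> [x0 Px0] F_bound.
apply: (@squeeze_cvge _ _ _ _ (cst 0%E) _ (fun eps => (eps *+ n)%:E)).
- near=> eps.
  have eps_gt0 : 0 < eps by near: eps; exact: nbhs_right_gt.
  apply/andP; split.
    apply: le_trans (ereal_sup_ubound _); last by exists x0.
    by rewrite /cst lee_fin.
  by apply: ge_ereal_sup => _ [x Px <-]; rewrite lee_fin F_bound.
- exact: cvg_cst.
- apply: cvg_EFin; first exact: nearW.
  have : (fun eps : R => eps *+ n) @ 0^'+ --> 0 *+ n.
    by apply: cvg_at_right_filter; apply: cvgMn; exact: cvg_id.
  by rewrite mul0rn.
Unshelve. all: end_near.
Qed.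

Theorem proposition1 (R : realType) (pl pu p0 alpha : R)
  (hp : pl <= pu) (ha : alpha != 0) :
  ((fun eps : R => ereal_sup
      [set (`|pgk_eps pl pu p0 alpha eps D - pgk pl pu p0 alpha D|)%:E
      | D in [set: R]]) @ 0^'+ --> (0 : \bar R)%E)
  /\
  ((fun eps : R => ereal_sup
      [set (`|pgk_tilde_eps pu p0 alpha eps D - pgk_tilde pu p0 alpha D|)%:E
      | D in [set D : R | (pl - p0) / alpha <= D]]) @ 0^'+ --> (0 : \bar R)%E).
Proof.
split.
- apply: (ereal_sup_cvg0_at_right _ _ 2); first by exists 0.
  by move=> eps D eps_gt0 _; exact: (dist_pgk_eps pl pu p0 alpha eps D eps_gt0).
- apply: (ereal_sup_cvg0_at_right _ _ 1); first by exists ((pl - p0) / alpha) => /=.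
  by move=> eps D eps_gt0 _; exact: (dist_pgk_tilde_eps pu p0 alpha eps D eps_gt0).
Qed.
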